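(* Let $\Omega\subset\mathbb R^N$ be open and let $T:\Omega\to\mathbb R$ be continuous and such that $\mathrm{epi}(T)$ has locally positive reach. Let $\bar x\in\Omega$. Then $T$ is non-Lipschitz at $\bar x$ if and only if there exists a nonzero vector $\zeta\in\mathbb R^N$ such that $(\zeta,0)\in N_{\mathrm{epi}(T)}(\bar x,T(\bar x))$.
   Context: $\mathrm{epi}(T)=\{(x,y)\in\Omega\times\mathbb R: y\ge T(x)\}$. For a closed set $K$ and $z\in K$, $v\in N_K(z)$ (proximal normal cone) iff there is $\sigma\ge0$ with $\langle v,w-z\rangle\le\sigma\|w-z\|^2$ for all $w\in K$. A locally closed set $K$ has locally positive reach if there is a continuous $\varphi:K\to[0,\infty)$ with $\langle v,w-z\rangle\le\varphi(z)\|v\|\|w-z\|^2$ for all $z,w\in K$ and $v\in N_K(z)$. $T$ is non-Lipschitz at $x$ if there exist sequences $x_i\to x$, $y_i\to x$ with $x_i\neq y_i$ and $\limsup_{i\to\infty}|T(y_i)-T(x_i)|/\|y_i-x_i\|=+\infty$. *)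

From HB Require Import structures.
From mathcomp Require Import all_boot all_order all_algebra.
From mathcomp Require Import all_classical all_reals all_analysis.
Set Implicit Arguments. Unset Strict Implicit. Unset Printing Implicit Defensive.
Import Order.TTheory GRing.Theory Num.Theory.
Import numFieldNormedType.Exports.
Local Open Scope classical_set_scope.
Local Open Scope ring_scope.

Section Defs.
Variables (R : realType) (N : nat).

Definition dotv (u v : 'rV[R]_N) : R := \sum_(i < N) u ord0 i * v ord0 i.
Definition normv (u : 'rV[R]_N) : R := Num.sqrt (dotv u u).

Definition psub (a b : 'rV[R]_N * R) : 'rV[R]_N * R := (a.1 - b.1, a.2 - b.2).
Definition dotp (a b : 'rV[R]_N * R) : R := dotv a.1 b.1 + a.2 * b.2.
Definition normp (a : 'rV[R]_N * R) : R := Num.sqrt (dotp a a).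

Definition epi (Omega : set 'rV[R]_N) (T : 'rV[R]_N -> R) : set ('rV[R]_N * R) :=
  [set p | Omega p.1 /\ T p.1 <= p.2].

Definition prox_normal (K : set ('rV[R]_N * R)) (z v : 'rV[R]_N * R) : Prop :=
  exists sigma : R, 0 <= sigma /\
    forall w, K w -> dotp v (psub w z) <= sigma * normp (psub w z) ^+ 2.

Definition locally_closed (K : set ('rV[R]_N * R)) : Prop :=
  forall z, K z -> exists r : R, 0 < r /\
    closed [set w | K w /\ normp (psub w z) <= r].

Definition loc_pos_reach (K : set ('rV[R]_N * R)) : Prop :=
  locally_closed K /\
  exists phi : 'rV[R]_N * R -> R,
    {within K, continuous phi} /\ (forall z, K z -> 0 <= phi z) /\
    forall z w v, K z -> K w -> prox_normal K z v ->
      dotp v (psub w z) <= phi z * normp v * normp (psub w z) ^+ 2.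

Definition non_lipschitz_at (Omega : set 'rV[R]_N) (T : 'rV[R]_N -> R)
    (x : 'rV[R]_N) : Prop :=
  exists xs ys : nat -> 'rV[R]_N,
    (forall i, Omega (xs i)) /\ (forall i, Omega (ys i)) /\
    xs @ \oo --> x /\ ys @ \oo --> x /\ (forall i, xs i != ys i) /\
    forall (M : R) (n : nat), exists i : nat, (n <= i)%N /\
      M < `|T (ys i) - T (xs i)| / normv (ys i - xs i).

End Defs.

(* If (zeta, 0) is a proximal normal to the epigraph at (xbar, T xbar), the
   proximal inequality tested at (xbar + t zeta, T (xbar + t zeta)) reads
   t |zeta|^2 <= sigma (t^2 |zeta|^2 + D_t^2), so the difference quotients
   |D_t| / (t |zeta|) blow up as t -> 0.
   Conversely, assume there is no horizontal proximal normal. Since positive reach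
   bounds the proximal constant of unit normals uniformly near (xbar, T xbar),
   cluster points of unit normals at nearby points are proximal normals at
   (xbar, T xbar); hence the normals near (xbar, T xbar) stay in a cone
   |v_1| <= c (- v_2). Projecting (x, T x - eps) onto the epigraph produces such a
   normal at a point q, and positive reach at q tested against (y, T y) yields
   T y - T x >= - A |y - x| - C (|y - x|^2 + (T y - T x)^2).
   Exchanging x and y, with T y - T x small by continuity, T is Lipschitz near
   xbar. *)

From HB Require Import structures.
From mathcomp Require Import all_boot all_order all_algebra.
From mathcomp Require Import all_classical all_reals all_analysis.
From mathcomp Require Import ring lra.
Import Order.TTheory GRing.Theory Num.Theory.
Import numFieldNormedType.Exports.
Local Open Scope classical_set_scope.
Local Open Scope ring_scope.
Set Implicit Arguments. Unset Strict Implicit.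

Section Euclid.
Variables (R : realType) (N : nat).
Implicit Types (u v w : 'rV[R]_N) (a b c : 'rV[R]_N * R).

Lemma dotvC u v : dotv u v = dotv v u.
Proof. by apply: eq_bigr => i _; rewrite mulrC. Qed.

Lemma dotvDl u v w : dotv (u + v) w = dotv u w + dotv v w.
Proof. by rewrite /dotv -big_split; apply: eq_bigr => i _; rewrite mxE mulrDl. Qed.

Lemma dotvNl u w : dotv (- u) w = - dotv u w.
Proof. by rewrite /dotv -sumrN; apply: eq_bigr => i _; rewrite mxE mulNr. Qed.

Lemma dotvZl k u w : dotv (k *: u) w = k * dotv u w.
Proof. by rewrite /dotv mulr_sumr; apply: eq_bigr => i _; rewrite mxE mulrA. Qed.

Lemma dotv0l w : dotv 0 w = 0.
Proof. by rewrite /dotv big1 // => i _; rewrite mxE mul0r. Qed.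

Lemma dotv_ge0 u : 0 <= dotv u u.
Proof. by apply: sumr_ge0 => i _; rewrite -expr2 sqr_ge0. Qed.

Lemma dotv_eq0 u : dotv u u = 0 -> u = 0.
Proof.
move=> /eqP; rewrite psumr_eq0; last by move=> i _; rewrite -expr2 sqr_ge0.
move=> /allP u0; apply/rowP => i; rewrite mxE.
by have := u0 i (mem_index_enum i); rewrite /= mulf_eq0 orbb => /eqP.
Qed.

Lemma sqr_coord_le_dotv u i : u ord0 i ^+ 2 <= dotv u u.
Proof.
rewrite /dotv (bigD1 i) //= expr2 lerDl.
by apply: sumr_ge0 => j _; rewrite -expr2 sqr_ge0.
Qed.

Definition padd a b : 'rV[R]_N * R := (a.1 + b.1, a.2 + b.2).
Definition pscale k a : 'rV[R]_N * R := (k *: a.1, k * a.2).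

Lemma dotpC a b : dotp a b = dotp b a.
Proof. by rewrite /dotp dotvC mulrC. Qed.

Lemma dotpDl a b c : dotp (padd a b) c = dotp a c + dotp b c.
Proof. rewrite /dotp /padd /= dotvDl; ring. Qed.

Lemma dotpBl a b c : dotp (psub a b) c = dotp a c - dotp b c.
Proof. rewrite /dotp /psub /= dotvDl dotvNl; ring. Qed.

Lemma dotpDr a b c : dotp c (padd a b) = dotp c a + dotp c b.
Proof. by rewrite dotpC dotpDl !(dotpC c). Qed.

Lemma dotpBr a b c : dotp c (psub a b) = dotp c a - dotp c b.
Proof. by rewrite dotpC dotpBl !(dotpC c). Qed.

Lemma dotpZl k a b : dotp (pscale k a) b = k * dotp a b.
Proof. rewrite /dotp /pscale /= dotvZl; ring. Qed.

Lemma dotpZr k a b : dotp a (pscale k b) = k * dotp a b.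
Proof. by rewrite dotpC dotpZl dotpC. Qed.

Lemma dotp_ge0 a : 0 <= dotp a a.
Proof. by rewrite /dotp addr_ge0 ?dotv_ge0 // -expr2 sqr_ge0. Qed.

Lemma dotp_eq0 a : dotp a a = 0 -> a = (0, 0).
Proof.
case: a => x t; rewrite /dotp /= => /eqP.
rewrite paddr_eq0 ?dotv_ge0 -?expr2 ?sqr_ge0 //.
by case/andP => /eqP/dotv_eq0 ->; rewrite sqrf_eq0 => /eqP ->.
Qed.

Lemma dotp_psub a b :
  dotp (psub a b) (psub a b) = dotp a a - 2 * dotp a b + dotp b b.
Proof. rewrite dotpBl !dotpBr (dotpC b a); ring. Qed.

Lemma normp_ge0 a : 0 <= normp a. Proof. exact: sqrtr_ge0. Qed.
Lemma normv_ge0 u : 0 <= normv u. Proof. exact: sqrtr_ge0. Qed.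

Lemma norm_coord_le_normv u i : `|u ord0 i| <= normv u.
Proof. by rewrite -sqrtr_sqr /normv ler_sqrt ?dotv_ge0 ?sqr_coord_le_dotv. Qed.

Lemma sqr_normp a : normp a ^+ 2 = dotp a a.
Proof. by rewrite sqr_sqrtr // dotp_ge0. Qed.

Lemma sqr_normv u : normv u ^+ 2 = dotv u u.
Proof. by rewrite sqr_sqrtr // dotv_ge0. Qed.

Lemma normp_eq0 a : normp a = 0 -> a = (0, 0).
Proof. by move=> a0; apply: dotp_eq0; rewrite -sqr_normp a0 expr0n. Qed.

Lemma normv_eq0 u : normv u = 0 -> u = 0.
Proof. by move=> u0; apply: dotv_eq0; rewrite -sqr_normv u0 expr0n. Qed.

Lemma normv0 : normv (0 : 'rV[R]_N) = 0.
Proof. by rewrite /normv dotv0l sqrtr0. Qed.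

Lemma normv_gt0 u : (0 < normv u) = (u != 0).
Proof.
rewrite lt0r normv_ge0 andbT; apply/idP/idP; apply: contra.
  by move=> /eqP ->; rewrite normv0.
by move=> /eqP/normv_eq0 ->.
Qed.

Lemma normp_vec u : normp (u, 0) = normv u.
Proof. by rewrite /normp /dotp /= mulr0 addr0. Qed.

Lemma normp_vert t : normp ((0 : 'rV[R]_N), t) = `|t|.
Proof. by rewrite /normp /dotp /= dotv0l add0r -expr2 sqrtr_sqr. Qed.

Lemma normp_psub_vert u s t : normp (psub (u, s) (u, t)) = `|s - t|.
Proof. by rewrite /psub /= subrr normp_vert. Qed.

Lemma dotp_sqr_le a b : dotp a b ^+ 2 <= dotp a a * dotp b b.
Proof.
set A := dotp a a; set B := dotp b b; set X := dotp a b.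
have quad t : 0 <= t ^+ 2 * A - 2 * t * X + B.
  have := dotp_ge0 (psub (pscale t a) b).
  rewrite dotpBl !dotpBr !dotpZl !dotpZr (dotpC b a) /A /B /X; lra.
have [A0|A_neq0] := eqVneq A 0.
  suff -> : X = 0 by rewrite A0 expr0n mul0r.
  apply/eqP/negPn/negP => X_neq0.
  have := quad ((B + 1) / (2 * X)); rewrite A0 mulr0 add0r.
  have -> : 2 * ((B + 1) / (2 * X)) * X = B + 1 by field; rewrite X_neq0.
  lra.
have A_gt0 : 0 < A by rewrite lt0r A_neq0 dotp_ge0.
have := quad (X / A).
have -> : (X / A) ^+ 2 * A - 2 * (X / A) * X + B = B - X ^+ 2 / A by field.
by rewrite subr_ge0 ler_pdivrMr // mulrC.
Qed.

Lemma dotp_le_normp a b : dotp a b <= normp a * normp b.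
Proof.
rewrite /normp -sqrtrM ?dotp_ge0 //; apply: le_trans (ler_norm _) _.
by rewrite -sqrtr_sqr ler_sqrt ?mulr_ge0 ?dotp_ge0 ?dotp_sqr_le.
Qed.

Lemma dotv_le_normv u w : dotv u w <= normv u * normv w.
Proof.
by have := dotp_le_normp (u, 0) (w, 0); rewrite /dotp /= mulr0 addr0 !normp_vec.
Qed.

Lemma normpD a b : normp (padd a b) <= normp a + normp b.
Proof.
rewrite -(ger0_norm (addr_ge0 (normp_ge0 a) (normp_ge0 b))) -sqrtr_sqr.
rewrite /normp ler_sqrt ?sqr_ge0 // dotpDl !dotpDr -!/(normp _) sqrrD.
by rewrite -!sqr_normp (dotpC b a); have := dotp_le_normp a b; lra.
Qed.

Lemma normpZ k a : normp (pscale k a) = `|k| * normp a.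
Proof.
by rewrite /normp dotpZl dotpZr mulrA -expr2 sqrtrM ?sqr_ge0 // sqrtr_sqr.
Qed.

Lemma normvZ k u : normv (k *: u) = `|k| * normv u.
Proof. by have := normpZ k (u, 0); rewrite /pscale /= mulr0 !normp_vec. Qed.

Lemma normvN u : normv (- u) = normv u.
Proof. by rewrite -scaleN1r normvZ normrN1 mul1r. Qed.

Lemma normv_fst a : normv a.1 <= normp a.
Proof.
rewrite /normp /normv /dotp ler_sqrt ?lerDl -?expr2 ?sqr_ge0 //.
by rewrite addr_ge0 ?dotv_ge0 ?sqr_ge0.
Qed.

Lemma norm_snd a : `|a.2| <= normp a.
Proof.
rewrite -sqrtr_sqr /normp /dotp ler_sqrt ?lerDr -?expr2 ?dotv_ge0 //.
by rewrite addr_ge0 ?dotv_ge0 ?sqr_ge0.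
Qed.

Lemma normp_le_pair u t : normp (u, t) <= normv u + `|t|.
Proof.
have -> : (u, t) = padd (u, 0) (0, t) by rewrite /padd /= addr0 add0r.
by apply: le_trans (normpD _ _) _; rewrite normp_vec normp_vert.
Qed.

Lemma psub_padd a b c : psub a c = padd (psub a b) (psub b c).
Proof. by rewrite /psub /padd /= !addrA !subrK. Qed.

Lemma normp_psub_le a b c :
  normp (psub a c) <= normp (psub a b) + normp (psub b c).
Proof. by rewrite (psub_padd a b c); exact: normpD. Qed.

Lemma normp_psubC a b : normp (psub a b) = normp (psub b a).
Proof.
have -> : psub a b = pscale (-1) (psub b a).
  by rewrite /pscale /psub /= scaleN1r mulN1r !opprB.
by rewrite normpZ normrN1 mul1r.
Qed.

Lemma normv_sub_le u v w : normv (u - w) <= normv (u - v) + normv (v - w).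
Proof.
by have := normp_psub_le (u, 0) (v, 0) (w, 0); rewrite /psub /= !subrr !normp_vec.
Qed.

Lemma normv_subC u w : normv (u - w) = normv (w - u).
Proof. by rewrite -normvN opprB. Qed.

Lemma normp_le_add a b : normp a <= normp (psub a b) + normp b.
Proof.
have {1}-> : a = padd (psub a b) b by rewrite /padd /psub /= !subrK; case: a.
exact: normpD.
Qed.

End Euclid.

Section Topology.
Variables (R : realType) (N : nat).

Lemma ball_normv (x y : 'rV[R]_N) e : normv (y - x) < e -> ball x e y.
Proof.
move=> yx_lt; rewrite -ball_normE /ball_ /=; change (mx_norm (x - y) < e).
have e_gt0 : 0 < e by apply: le_lt_trans yx_lt; exact: normv_ge0.
rewrite mx_normrE; elim/big_ind: _ => //; first by move=> a b; rewrite gt_max => -> ->.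
move=> [i j] _ /=; rewrite (ord1 i) !mxE -normrN opprB.
by apply: le_lt_trans yx_lt; have := norm_coord_le_normv (y - x) j; rewrite !mxE.
Qed.

Lemma ball_normp (a b : 'rV[R]_N * R) e : normp (psub b a) < e -> ball a e b.
Proof.
move=> ba_lt; split => /=.
  by apply: ball_normv; apply: le_lt_trans ba_lt; exact: (normv_fst (psub b a)).
rewrite -ball_normE /ball_ /= -normrN opprB.
by apply: le_lt_trans ba_lt; exact: (norm_snd (psub b a)).
Qed.

Variable (Y : topologicalType).

Lemma dotv_continuous (F G : Y -> 'rV[R]_N) : continuous F -> continuous G ->
  continuous (fun t => dotv (F t) (G t)).
Proof.
move=> cF cG; apply: (continuous_big (op := +%R)); first exact: add_continuous.
move=> i _ x; apply: continuousM.
  exact: (continuous_comp (cF x) (@coord_continuous _ _ _ _ _ _)).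
exact: (continuous_comp (cG x) (@coord_continuous _ _ _ _ _ _)).
Qed.

Lemma fst_continuous (F : Y -> 'rV[R]_N * R) : continuous F ->
  continuous (fun t => (F t).1).
Proof. by move=> cF t; apply: continuous_comp; [exact: cF | exact: cvg_fst]. Qed.

Lemma snd_continuous (F : Y -> 'rV[R]_N * R) : continuous F ->
  continuous (fun t => (F t).2).
Proof. by move=> cF t; apply: continuous_comp; [exact: cF | exact: cvg_snd]. Qed.

Lemma dotp_continuous (F G : Y -> 'rV[R]_N * R) : continuous F -> continuous G ->
  continuous (fun t => dotp (F t) (G t)).
Proof.
move=> cF cG t; have cd := dotv_continuous (fst_continuous cF) (fst_continuous cG).
have [cF2 cG2] := (snd_continuous cF, snd_continuous cG).
by apply: cvgD; [exact: cd | exact: cvgM (cF2 t) (cG2 t)].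
Qed.

Lemma normp_continuous (F : Y -> 'rV[R]_N * R) : continuous F ->
  continuous (fun t => normp (F t)).
Proof.
move=> cF x.
have cdot : {for x, continuous (fun t => dotp (F t) (F t))} by exact: dotp_continuous.
exact: (continuous_comp cdot (@sqrt_continuous R _)).
Qed.

Lemma normv_continuous (F : Y -> 'rV[R]_N) : continuous F ->
  continuous (fun t => normv (F t)).
Proof.
move=> cF x.
have cdot : {for x, continuous (fun t => dotv (F t) (F t))} by exact: dotv_continuous.
exact: (continuous_comp cdot (@sqrt_continuous R _)).
Qed.

Lemma psub_continuous (F G : Y -> 'rV[R]_N * R) : continuous F -> continuous G ->
  continuous (fun t => psub (F t) (G t)).
Proof.
move=> cF cG t; have [cF1 cG1] := (fst_continuous cF, fst_continuous cG).
have [cF2 cG2] := (snd_continuous cF, snd_continuous cG).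
exact: cvg_pair (cvgB (cF1 t) (cG1 t)) (cvgB (cF2 t) (cG2 t)).
Qed.

End Topology.

Section Analysis.
Variables (R : realType) (N : nat).

Lemma open_normv_ball (A : set 'rV[R]_N) x : open A -> A x ->
  exists2 r, 0 < r & forall y, normv (y - x) < r -> A y.
Proof.
move=> oA Ax; have /nbhs_ballP[r r_gt0 rA] : nbhs x A by exact: open_nbhs_nbhs.
by exists r => // y /ball_normv; exact: rA.
Qed.

Lemma continuous_within_ball (V : pseudoMetricType R) (A : set V) (f : V -> R) x :
  {within A, continuous f} -> A x -> forall e, 0 < e ->
  exists2 d, 0 < d & forall y, A y -> ball x d y -> `|f y - f x| < e.
Proof.
move=> cf Ax e e_gt0.
have /nbhs_ballP[d d_gt0 fd] := (subspace_continuousP A f).1 cf x Ax _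
  (nbhsx_ballx _ _ e_gt0).
exists d => // y Ay xy; have := fd y xy Ay.
by rewrite -ball_normE /ball_ /= -normrN opprB.
Qed.

Lemma compact_normp_le (A : set ('rV[R]_N * R)) M : closed A ->
  (forall a, A a -> normp a <= M) -> compact A.
Proof.
move=> cA A_le.
have box : compact ([set v : 'rV[R]_N | forall i, `[-M, M]%classic (v ord0 i)]
    `*` `[-M, M]%classic).
  apply: compact_setX; last exact: segment_compact.
  exact: (@rV_compact _ _ (fun=> `[-M, M]%classic) (fun _ => @segment_compact _ _ _)).
apply: (subclosed_compact cA box).
move=> a /A_le aM; split => [i|] /=; rewrite in_itv /= -ler_norml.
  exact: le_trans (norm_coord_le_normv _ _) (le_trans (normv_fst _) aM).
exact: le_trans (norm_snd _) aM.
Qed.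

Lemma cluster_closed_mem (T : topologicalType) (F : set_system T) (C : set T) a :
  cluster F a -> closed C -> F C -> C a.
Proof. by rewrite clusterE => Fa /closure_id cC FC; rewrite cC; exact: Fa. Qed.

Lemma harmonic_le1 n : harmonic n <= 1 :> R.
Proof. by rewrite /= invf_le1 ?ltr0n // ler1n. Qed.

Lemma near_harmonic_lt (c e : R) : 0 < e -> \forall n \near \oo, c * harmonic n < e.
Proof.
move=> e_gt0; apply: (cvgr_lt 0) e_gt0.
have -> : 0 = c * 0 :> R by rewrite mulr0.
by apply: cvgM; [exact: cvg_cst | exact: cvg_harmonic].
Qed.

Lemma ler_of_le_addr_small (a b c : R) : 0 <= c ->
  (forall e, 0 < e -> e <= 1 -> a <= b + c * e) -> a <= b.
Proof.
move=> c_ge0 ab; apply/ler_addgt0Pr => e e_gt0.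
pose e' := Num.min 1 (e / (c + 1)).
have c1_gt0 : 0 < c + 1 by rewrite ltr_wpDl.
have e'_gt0 : 0 < e' by rewrite lt_min ltr01 divr_gt0.
have e'_le1 : e' <= 1 by rewrite ge_min lexx.
apply: le_trans (ab e' e'_gt0 e'_le1) _; rewrite lerD2l.
have : e' * (c + 1) <= e by rewrite -ler_pdivlMr // ge_min lexx orbT.
by have := mulr_ge0 c_ge0 (ltW e'_gt0); nra.
Qed.

End Analysis.

Section ProximalNormal.
Variables (R : realType) (N : nat) (K : set ('rV[R]_N * R)).

Lemma prox_normalZ z v k : 0 < k -> prox_normal K z v -> prox_normal K z (pscale k v).
Proof.
move=> k_gt0 [s [s_ge0 hs]]; exists (k * s); split; first by rewrite mulr_ge0 // ltW.
by move=> w Kw; rewrite dotpZl -mulrA ler_pM2l //; exact: hs.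
Qed.

Lemma nearest_prox_normal z r p q : 0 < r -> K q -> normp (psub q z) <= r / 2 ->
  (forall w, K w -> normp (psub w z) <= r -> normp (psub p q) <= normp (psub p w)) ->
  prox_normal K q (psub p q).
Proof.
move=> r_gt0 Kq qz q_min; set v := psub p q.
set c := 2 * normp v / r.
have c_ge0 : 0 <= c by rewrite divr_ge0 ?mulr_ge0 ?normp_ge0 // ltW.
exists (1 + c); split; first by rewrite addr_ge0.
move=> w Kw; have wq_ge0 := normp_ge0 (psub w q).
have [wz_le|wz_gt] := leP (normp (psub w z)) r.
- (* |p - q|^2 <= |p - w|^2 = |v|^2 - 2 <v, w - q> + |w - q|^2 *)
  have pw : psub p w = psub v (psub w q) by rewrite /v /psub /= !opprB !addrA !subrK.
  have pq_le := q_min w Kw wz_le.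
  have := ler_pM (normp_ge0 _) (normp_ge0 _) pq_le pq_le.
  rewrite -!expr2 pw (sqr_normp (psub v _)) dotp_psub -!sqr_normp -/v.
  have : 0 <= c * normp (psub w q) ^+ 2 by rewrite mulr_ge0 ?sqr_ge0.
  by have := sqr_ge0 (normp (psub w q)); lra.
-
  have wq_ge : r <= 2 * normp (psub w q).
    by have := normp_psub_le w q z; lra.
  have := dotp_le_normp v (psub w q).
  have : 0 <= c * normp (psub w q) * (2 * normp (psub w q) - r).
    by apply: mulr_ge0; [exact: mulr_ge0 | rewrite subr_ge0].
  have : c * r = 2 * normp v by rewrite /c mulfVK ?gt_eqF.
  nra.
Qed.

Lemma local_projection z r p w0 : 0 < r ->
  closed [set w | K w /\ normp (psub w z) <= r] -> K w0 ->
  normp (psub w0 z) + 2 * normp (psub p w0) <= r / 2 ->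
  exists q, [/\ K q, normp (psub p q) <= normp (psub p w0),
    normp (psub q z) <= normp (psub w0 z) + 2 * normp (psub p w0) &
    prox_normal K q (psub p q)].
Proof.
move=> r_gt0 cA Kw0 w0_near; set A := [set w | K w /\ normp (psub w z) <= r].
have Aw0 : A w0.
  by split => //; have := normp_ge0 (psub p w0); lra.
have A_cpt : compact A.
  apply: (compact_normp_le (M := r + normp z) cA) => w [_ wz].
  by apply: le_trans (normp_le_add w z) _; rewrite lerD2r.
have cdist : continuous (fun w => normp (psub p w)).
  by apply: normp_continuous; apply: psub_continuous => w; [exact: cvg_cst | exact: cvg_id].
have [q qA q_min] := compact_EVT_min (ex_intro _ w0 Aw0) A_cpt
  (continuous_subspaceT cdist).
have [Kq _] : A q by rewrite -inE.
have pq_le : normp (psub p q) <= normp (psub p w0) by apply: q_min; rewrite inE.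
have qz_le : normp (psub q z) <= normp (psub w0 z) + 2 * normp (psub p w0).
  have := normp_psub_le q p z; have := normp_psub_le p w0 z.
  by rewrite (normp_psubC q p); lra.
exists q; split => //; apply: (nearest_prox_normal (z := z) r_gt0) => //.
  by apply: le_trans qz_le w0_near.
by move=> w Kw wz; apply: q_min; rewrite inE.
Qed.

Lemma loc_pos_reach_bound z0 : loc_pos_reach K -> K z0 ->
  exists2 Phi, 0 < Phi & exists2 d, 0 < d & forall z w v, K z ->
    normp (psub z z0) < d -> K w -> prox_normal K z v ->
    dotp v (psub w z) <= Phi * normp v * normp (psub w z) ^+ 2.
Proof.
move=> [_ [phi [phic [phi_ge0 reach]]]] Kz0.
have [d d_gt0 phi_near] := continuous_within_ball phic Kz0 ltr01.
exists (phi z0 + 1); first by rewrite ltr_pwDr ?phi_ge0.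
exists d => // z w v Kz zz0 Kw vz; apply: le_trans (reach _ _ _ Kz Kw vz) _.
rewrite ler_wpM2r ?sqr_ge0 // ler_wpM2r ?normp_ge0 //.
have := phi_near z Kz (ball_normp zz0); have := ler_norm (phi z - phi z0); lra.
Qed.

Lemma unit_sphere_cluster (u : nat -> 'rV[R]_N * R) : (forall n, normp (u n) = 1) ->
  exists u0, normp u0 = 1 /\ cluster (u @ \oo) u0.
Proof.
move=> u1; have cS : closed [set a : 'rV[R]_N * R | normp a = 1].
  have cn : continuous (fun a : 'rV[R]_N * R => normp a).
    by apply: normp_continuous => a; exact: cvg_id.
  exact: (preimage_closed (fun a _ => cn a) (@closed_eq R 1)).
have cpt : compact [set a : 'rV[R]_N * R | normp a = 1].
  by apply: (compact_normp_le (M := 1) cS) => a ->.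
have uS : (u @ \oo) [set a | normp a = 1] by exists 0%N => // n _; exact: u1.
have [u0 [u0_1 u0_cl]] := cpt (u @ \oo) _ uS.
by exists u0.
Qed.

Lemma prox_normal_cluster z Phi (zs us : nat -> 'rV[R]_N * R) u0 : 0 <= Phi ->
  (forall e, 0 < e -> \forall n \near \oo, normp (psub (zs n) z) < e) ->
  (forall n, normp (us n) = 1) ->
  (forall n w, K w -> dotp (us n) (psub w (zs n)) <= Phi * normp (psub w (zs n)) ^+ 2) ->
  cluster (us @ \oo) u0 -> prox_normal K z u0.
Proof.
move=> Phi_ge0 zs_z us1 us_reach u0_cl; exists Phi; split => // w Kw.
set D := normp (psub w z); have D_ge0 : 0 <= D := normp_ge0 _.
apply: (ler_of_le_addr_small (c := Phi * (2 * D + 1) + 1)) => [|e e_gt0 e_le1].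
  by rewrite addr_ge0 ?mulr_ge0 ?addr_ge0 ?mulr_ge0.
have cC : closed [set a | dotp a (psub w z) <= Phi * (D + e) ^+ 2 + e].
  have cd : continuous (fun a => dotp a (psub w z)).
    by apply: dotp_continuous => a; [exact: cvg_id | exact: cvg_cst].
  exact: (preimage_closed (fun a _ => cd a) (@closed_le R _)).
have ev : \forall n \near \oo, dotp (us n) (psub w z) <= Phi * (D + e) ^+ 2 + e.
  near=> n; rewrite (psub_padd w (zs n) z) dotpDr.
  have zs_e : normp (psub (zs n) z) < e by near: n; exact: zs_z.
  have wzs : normp (psub w (zs n)) <= D + e.
    by have := normp_psub_le w z (zs n); rewrite (normp_psubC z) -/D; lra.
  apply: lerD; last by apply: le_trans (dotp_le_normp _ _) _; rewrite us1 mul1r ltW.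
  apply: le_trans (us_reach n w Kw) _; rewrite ler_wpM2l //.
  by rewrite ler_pM ?normp_ge0.
apply: le_trans (cluster_closed_mem u0_cl cC ev) _.
have : 0 <= Phi * (e * (1 - e)) by rewrite mulr_ge0 // mulr_ge0 ?subr_ge0 // ltW.
nra.
Unshelve. all: by end_near.
Qed.

End ProximalNormal.

Lemma epi_prox_normal_snd_le0 (R : realType) (N : nat) (Omega : set 'rV[R]_N)
    (T : 'rV[R]_N -> R) z v :
  epi Omega T z -> prox_normal (epi Omega T) z v -> v.2 <= 0.
Proof.
move=> [Oz Tz] [s [s_ge0 hs]]; apply: (ler_of_le_addr_small s_ge0) => t t_gt0 _.
have /hs : epi Omega T (z.1, z.2 + t) by split => //=; rewrite ler_wpDr // ltW.
have -> : psub (z.1, z.2 + t) z = (0, t) by rewrite /psub /= subrr addrC addKr.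
rewrite normp_vert real_normK ?num_real // /dotp dotvC dotv0l add0r /=.
nra.
Qed.

(* Positive reach at [q] for the normal [(v1, - lam)], tested against [(y, ty)],
   where [q] lies within [2 d] of [(x, tx)]. *)
Lemma lower_bound_of_normal (R : realType) (N : nat) (y v1 : 'rV[R]_N) (q : 'rV[R]_N * R)
    (ty tx lam c C d : R) :
  0 < lam -> 0 <= C -> normv v1 <= c * lam ->
  dotv v1 (y - q.1) - lam * (ty - q.2) <= C * lam * normp (psub (y, ty) q) ^+ 2 ->
  normv (y - q.1) <= 2 * d -> tx - 2 * d <= q.2 ->
  normp (psub (y, ty) q) <= 3 * d + `|ty - tx| ->
  - ((2 * c + 2) * d) - C * (18 * d ^+ 2 + 2 * (ty - tx) ^+ 2) <= ty - tx.
Proof.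
move=> lam_gt0 C_ge0 v1_le reach yq_le q2_ge W_le.
set W := normp (psub (y, ty) q) in reach W_le.
have dot_ge : - (c * lam * (2 * d)) <= dotv v1 (y - q.1).
  rewrite lerNl -dotvNl; apply: le_trans (dotv_le_normv _ _) _.
  by rewrite normvN ler_pM ?normv_ge0.
have key : - (2 * c * d) - C * W ^+ 2 <= ty - q.2.
  rewrite -(ler_pM2l lam_gt0); nra.
have W2 : W ^+ 2 <= 18 * d ^+ 2 + 2 * (ty - tx) ^+ 2.
  have W_ge0 : 0 <= W := normp_ge0 _.
  apply: le_trans (ler_pM W_ge0 W_ge0 W_le W_le) _.
  rewrite -(real_normK (num_real (ty - tx))).
  by have := sqr_ge0 (3 * d - `|ty - tx|); nra.
by have := ler_wpM2l C_ge0 W2; nra.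
Qed.

Lemma cone_snd_lt0 (R : realType) (N : nat) (c : R) (v : 'rV[R]_N * R) : 0 < c ->
  normv v.1 <= c * - v.2 -> v != (0, 0) -> 0 < - v.2.
Proof.
move=> c_gt0 cone; apply: contraNT; rewrite -leNgt => lam_le0.
have v1_0 : v.1 = 0.
  apply/normv_eq0/eqP; rewrite eq_le normv_ge0 andbT.
  by apply: le_trans cone _; rewrite mulr_ge0_le0 // ltW.
have v2_0 : v.2 = 0.
  by have := le_trans (normv_ge0 _) cone; rewrite pmulr_rge0 //; lra.
by rewrite (surjective_pairing v) v1_0 v2_0.
Qed.

Lemma abs_le_of_two_sided (R : realType) (A C d D : R) :
  0 <= A -> 0 <= C -> 0 <= d -> d <= 1 -> 4 * C * `|D| <= 1 ->
  - (A * d) - C * (18 * d ^+ 2 + 2 * D ^+ 2) <= D ->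
  - (A * d) - C * (18 * d ^+ 2 + 2 * D ^+ 2) <= - D ->
  `|D| <= 2 * (A + 18 * C) * d.
Proof.
move=> A_ge0 C_ge0 d_ge0 d_le1 CD_le D_ge D_le.
have D2 : D ^+ 2 = `|D| * `|D| by rewrite -expr2 real_normK ?num_real.
have absD : `|D| <= A * d + 18 * C * d ^+ 2 + 2 * C * D ^+ 2.
  by rewrite ler_norml; apply/andP; split; lra.
have d2 : C * d ^+ 2 <= C * d by rewrite ler_wpM2l // expr2 ler_piMr.
have CD2 : 2 * C * D ^+ 2 <= `|D| / 2.
  by rewrite D2; have := normr_ge0 D; nra.
lra.
Qed.

Section Epigraph.
Variables (R : realType) (N : nat) (Omega : set 'rV[R]_N) (T : 'rV[R]_N -> R).
Variable xbar : 'rV[R]_N.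
Hypothesis Oxbar : Omega xbar.
Local Notation K := (epi Omega T).
Local Notation zbar := (xbar, T xbar).

Let Kzbar : K zbar. Proof. by []. Qed.

Lemma horizontal_normal_of_steep_normals Phi d (zs vs : nat -> 'rV[R]_N * R) :
  0 < Phi -> 0 < d ->
  (forall z w v, K z -> normp (psub z zbar) < d -> K w -> prox_normal K z v ->
    dotp v (psub w z) <= Phi * normp v * normp (psub w z) ^+ 2) ->
  (forall n, K (zs n)) -> (forall n, normp (psub (zs n) zbar) < d * harmonic n) ->
  (forall n, prox_normal K (zs n) (vs n)) ->
  (forall n, - (vs n).2 < harmonic n * normv (vs n).1) ->
  exists zeta : 'rV[R]_N, zeta != 0 /\ prox_normal K zbar (zeta, 0).
Proof.
move=> Phi_gt0 d_gt0 reach Kz zn vz v_steep.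
pose u n := pscale (normp (vs n))^-1 (vs n).
have v_gt0 n : 0 < normp (vs n).
  rewrite lt0r normp_ge0 andbT; apply/eqP => /normp_eq0 v0.
  by have := v_steep n; rewrite v0 normv0 mulr0 oppr0 ltxx.
have u1 n : normp (u n) = 1.
  by rewrite normpZ ger0_norm ?invr_ge0 ?normp_ge0 // mulVf ?gt_eqF.
have [u0 [u0_1 u0_cl]] := unit_sphere_cluster u1.
have u_reach n w : K w -> dotp (u n) (psub w (zs n)) <= Phi * normp (psub w (zs n)) ^+ 2.
  move=> Kw; rewrite -[Phi]mulr1 -(u1 n).
  apply: reach (Kz n) _ Kw _; last by apply: prox_normalZ; rewrite ?invr_gt0.
  by apply: lt_le_trans (zn n) _; rewrite ger_pMr ?harmonic_le1.
have u0_normal : prox_normal K zbar u0.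
  apply: (prox_normal_cluster (ltW Phi_gt0) _ u1 u_reach u0_cl) => e e_gt0.
  by apply: filterS (near_harmonic_lt d e_gt0) => n; exact: lt_trans (zn n).
have u_steep n : - (u n).2 < harmonic n.
  have h_gt0 : 0 < harmonic n := @harmonic_gt0 R n.
  apply: (@lt_le_trans _ _ (harmonic n * normv (u n).1)).
    rewrite /u /pscale /= normvZ ger0_norm ?invr_ge0 ?normp_ge0 //.
    by rewrite -mulrN mulrCA ltr_pM2l ?invr_gt0.
  by rewrite ler_piMr ?(ltW h_gt0) //; apply: le_trans (normv_fst (u n)) _; rewrite u1.
(* [u0] is horizontal: [u0.2 >= 0] by steepness, [u0.2 <= 0] as an epigraph normal *)
have u0_snd : u0.2 = 0.
  apply/eqP; rewrite eq_le (epi_prox_normal_snd_le0 Kzbar u0_normal) /=.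
  apply/ler_addgt0Pr => e e_gt0.
  have csnd : continuous (fun a : 'rV[R]_N * R => a.2) by move=> a; exact: cvg_snd.
  have cC : closed [set a : 'rV[R]_N * R | - e <= a.2].
    exact: (preimage_closed (fun a _ => csnd a) (@closed_ge R _)).
  have ev : \forall n \near \oo, - e <= (u n).2.
    apply: filterS (near_harmonic_lt 1 e_gt0) => n; rewrite mul1r lerNl => he.
    exact/ltW/(lt_trans (u_steep n)).
  by have := cluster_closed_mem u0_cl cC ev; rewrite /=; lra.
exists u0.1; split; last by rewrite -u0_snd -surjective_pairing.
apply/eqP => u01; move: u0_1; rewrite (surjective_pairing u0) u01 u0_snd normp_vert.
by rewrite normr0 => /eqP; rewrite eq_sym oner_eq0.
Qed.

Lemma normal_cone_near : loc_pos_reach K ->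
  ~ (exists zeta : 'rV[R]_N, zeta != 0 /\ prox_normal K zbar (zeta, 0)) ->
  exists2 delta, 0 < delta & exists2 c, 0 < c & forall z v, K z ->
    normp (psub z zbar) < delta -> prox_normal K z v -> normv v.1 <= c * - v.2.
Proof.
move=> reachK no_horizontal.
have [Phi Phi_gt0 [d d_gt0 reach]] := loc_pos_reach_bound reachK Kzbar.
apply: contrapT => no_cone.
have steep n : exists zv : ('rV[R]_N * R) * ('rV[R]_N * R),
    [/\ K zv.1, normp (psub zv.1 zbar) < d * harmonic n, prox_normal K zv.1 zv.2 &
        - zv.2.2 < harmonic n * normv zv.2.1].
  have h_gt0 : 0 < harmonic n := @harmonic_gt0 R n.
  apply: contrapT => no_steep; apply: no_cone.
  exists (d * harmonic n); first by rewrite mulr_gt0.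
  exists (harmonic n)^-1; first by rewrite invr_gt0.
  move=> z v Kz zn vz; rewrite leNgt; apply/negP => v_steep; apply: no_steep.
  exists (z, v); split => //=.
  by move: v_steep; rewrite -(ltr_pM2l h_gt0) mulrA mulfV ?mul1r // lt0r_neq0.
have [f /all_and4[Kz zn vz v_steep]] := choice steep.
apply: no_horizontal.
exact: (@horizontal_normal_of_steep_normals _ _ (fun n => (f n).1) (fun n => (f n).2)
  Phi_gt0 d_gt0 reach Kz zn vz v_steep).
Qed.

Lemma projection_below_graph z r x eps : 0 < r ->
  closed [set w | K w /\ normp (psub w z) <= r] -> Omega x -> 0 < eps ->
  normp (psub (x, T x) z) + 2 * eps <= r / 2 ->
  exists q, [/\ K q, prox_normal K q (psub (x, T x - eps) q),
    normp (psub (x, T x - eps) q) <= eps,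
    normp (psub q z) <= normp (psub (x, T x) z) + 2 * eps &
    psub (x, T x - eps) q != (0, 0)].
Proof.
move=> r_gt0 cA Ox eps_gt0 x_near.
have px : normp (psub (x, T x - eps) (x, T x)) = eps.
  by rewrite normp_psub_vert addrAC subrr add0r normrN gtr0_norm.
have Kx : K (x, T x) by [].
rewrite -px in x_near.
have [q [Kq pq qz q_normal]] := local_projection r_gt0 cA Kx x_near.
rewrite px in pq qz; exists q; split => //.
apply/negP; rewrite /psub /= => /eqP [/subr0_eq qx /subr0_eq q2E].
by case: Kq => _; rewrite -qx -q2E; lra.
Qed.

Lemma one_sided_estimate (delta c : R) : loc_pos_reach K -> 0 < delta -> 0 < c ->
  (forall z v, K z -> normp (psub z zbar) < delta -> prox_normal K z v ->
    normv v.1 <= c * - v.2) ->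
  exists2 eta, 0 < eta & exists2 C, 0 <= C & forall x y, Omega x -> Omega y ->
    normp (psub (x, T x) zbar) < eta ->
    - ((2 * c + 2) * normv (y - x)) -
      C * (18 * normv (y - x) ^+ 2 + 2 * (T y - T x) ^+ 2) <= T y - T x.
Proof.
move=> reachK delta_gt0 c_gt0 cone.
have [r [r_gt0 cA]] := reachK.1 _ Kzbar.
have [Phi Phi_gt0 [dphi dphi_gt0 reach]] := loc_pos_reach_bound reachK Kzbar.
pose eta := Num.min (r / 6) (Num.min (delta / 3) (dphi / 3)).
have eta_gt0 : 0 < eta by rewrite !lt_min !divr_gt0.
have [eta_r eta_delta eta_dphi] : [/\ eta <= r / 6, eta <= delta / 3 & eta <= dphi / 3].
  by rewrite !ge_min !lexx !orbT.
exists eta => //; exists (Phi * (c + 1)); first by rewrite mulr_ge0 ?addr_ge0 ?ltW.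
move=> x y Ox Oy xz; set C := Phi * (c + 1).
have C_ge0 : 0 <= C by rewrite mulr_ge0 ?addr_ge0 ?ltW.
have [->|xy] := eqVneq y x.
  rewrite !subrr expr0n /=; have := normv_ge0 (0 : 'rV[R]_N).
  by have := mulr_ge0 C_ge0 (sqr_ge0 (normv (0 : 'rV[R]_N))); nra.
set d := normv (y - x).
have d_gt0 : 0 < d by rewrite normv_gt0 subr_eq0.
pose eps := Num.min d eta.
have eps_gt0 : 0 < eps by rewrite lt_min d_gt0.
have [eps_d eps_eta] : eps <= d /\ eps <= eta by split; rewrite ge_min lexx ?orbT.
have x_near : normp (psub (x, T x) zbar) + 2 * eps <= r / 2 by lra.
have [q [Kq q_normal pq qz v_neq0]] := projection_below_graph r_gt0 cA Ox eps_gt0 x_near.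
set p := (x, T x - eps) in q_normal pq v_neq0; set v := psub p q in q_normal pq v_neq0.
have v_cone := cone q v Kq ltac:(lra) q_normal.
have lam_gt0 := cone_snd_lt0 c_gt0 v_cone v_neq0.
have [v1_le v2_le] : normv v.1 <= eps /\ `|v.2| <= eps.
  by split; apply: le_trans pq; [exact: normv_fst | exact: norm_snd].
have v_le : normp v <= (c + 1) * - v.2.
  apply: le_trans (normp_le_pair v.1 v.2) _; rewrite -normrN gtr0_norm //.
  by rewrite mulrDl mul1r lerD2r.
have Ky : K (y, T y) by [].
have := reach q (y, T y) v Kq ltac:(lra) Ky q_normal.
set W := normp (psub (y, T y) q) => reach_y.
apply: (lower_bound_of_normal (y := y) (q := q) (v1 := v.1) (lam := - v.2)) => //.
- apply: (@le_trans _ _ (Phi * normp v * W ^+ 2)).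
    by move: reach_y; rewrite /dotp /psub /= mulNr opprK; apply.
  by rewrite /C -!mulrA ler_pM2l // mulrA -/W ler_wpM2r ?sqr_ge0.
- by have := normv_sub_le y x q.1; rewrite -/d -[x - q.1]/(v.1); lra.
- by move: v2_le; rewrite ler_norml /v /psub /= => /andP[_]; lra.
- apply: le_trans (normp_psub_le (y, T y) (x, T x) q) _.
  have := normp_le_pair (y - x) (T y - T x); rewrite -/d.
  have : normp (psub p (x, T x)) = eps.
    by rewrite normp_psub_vert addrAC subrr add0r normrN gtr0_norm.
  by have := normp_psub_le (x, T x) p q; rewrite (normp_psubC (x, T x) p); lra.
Qed.

Lemma lipschitz_near : loc_pos_reach K -> {within Omega, continuous T} ->
  ~ (exists zeta : 'rV[R]_N, zeta != 0 /\ prox_normal K zbar (zeta, 0)) ->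
  exists2 rho, 0 < rho & exists B, forall x y, Omega x -> Omega y ->
    normv (x - xbar) < rho -> normv (y - xbar) < rho ->
    `|T y - T x| <= B * normv (y - x).
Proof.
move=> reachK Tc no_horizontal.
have [delta delta_gt0 [c c_gt0 cone]] := normal_cone_near reachK no_horizontal.
have [eta eta_gt0 [C C_ge0 est]] := one_sided_estimate reachK delta_gt0 c_gt0 cone.
pose e := Num.min (eta / 2) (1 / (8 * (C + 1))).
have e_gt0 : 0 < e by rewrite lt_min !divr_gt0 ?mulr_gt0 ?ltr_wpDl.
have [e_eta e_C] : e <= eta / 2 /\ e <= 1 / (8 * (C + 1)).
  by split; rewrite ge_min lexx ?orbT.
have [dT dT_gt0 T_near] := continuous_within_ball Tc Oxbar e_gt0.
pose rho := Num.min (Num.min (eta / 2) dT) (1 / 2).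
have rho_gt0 : 0 < rho by rewrite !lt_min dT_gt0 !divr_gt0.
have [rho_eta rho_dT rho_1] : [/\ rho <= eta / 2, rho <= dT & rho <= 1 / 2].
  by split; rewrite !ge_min lexx ?orbT.
have near_x x : Omega x -> normv (x - xbar) < rho ->
    normp (psub (x, T x) zbar) < eta /\ `|T x - T xbar| < e.
  move=> Ox xx; have Tx : `|T x - T xbar| < e.
    by apply: T_near => //; apply: ball_normv; lra.
  by split => //; apply: le_lt_trans (normp_le_pair _ _) _; rewrite /=; lra.
exists rho => //; exists (2 * ((2 * c + 2) + 18 * C)) => x y Ox Oy xx yx.
have [[xz Tx] [yz Ty]] := (near_x x Ox xx, near_x y Oy yx).
apply: abs_le_of_two_sided => //; first lra.
- exact: normv_ge0.
- by have := normv_sub_le y xbar x; rewrite (normv_subC xbar); lra.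
- have : `|T y - T x| <= `|T y - T xbar| + `|T x - T xbar|.
    have -> : T y - T x = (T y - T xbar) - (T x - T xbar) by ring.
    exact: ler_normB.
  move: e_C; rewrite ler_pdivlMr ?mulr_gt0 ?ltr_wpDl //.
  by have := normr_ge0 (T y - T x); nra.
- exact: est.
- by have := est y x Oy Ox yz; rewrite (normv_subC x y) -(opprB (T y)) sqrrN.
Qed.

End Epigraph.

Lemma near_normv_lt (R : realType) (N : nat) (s : nat -> 'rV[R]_N) (x : 'rV[R]_N) (r : R) :
  s @ \oo --> x -> 0 < r -> \forall n \near \oo, normv (s n - x) < r.
Proof.
move=> sx r_gt0; apply: (cvgr_lt 0) r_gt0.
have cn : continuous (fun y : 'rV[R]_N => normv (y - x)).
  by apply: normv_continuous => y; exact: (cvgB cvg_id (cvg_cst x)).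
by have := continuous_cvg _ (cn x) sx; rewrite subrr normv0; apply.
Qed.

Lemma horizontal_normal_steep (R : realType) (N : nat) (Omega : set 'rV[R]_N)
    (T : 'rV[R]_N -> R) x zeta (sigma t M : R) :
  (forall w, epi Omega T w ->
    dotp (zeta, 0) (psub w (x, T x)) <= sigma * normp (psub w (x, T x)) ^+ 2) ->
  0 <= sigma -> zeta != 0 -> 0 < t -> sigma * t * (1 + M ^+ 2) < 1 ->
  Omega (x + t *: zeta) ->
  M < `|T (x + t *: zeta) - T x| / normv (x + t *: zeta - x).
Proof.
move=> normal sigma_ge0 zeta_neq0 t_gt0 small Oy.
set y := x + t *: zeta; set D := T y - T x.
have yx : y - x = t *: zeta by rewrite /y (addrC x) addrK.
have z_gt0 : 0 < dotv zeta zeta.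
  by rewrite lt0r dotv_ge0 andbT; apply: contra zeta_neq0 => /eqP/dotv_eq0 ->.
have := normal (y, T y) (conj Oy (lexx _)).
have -> : psub (y, T y) (x, T x) = (t *: zeta, D) by rewrite /psub /= yx.
rewrite sqr_normp /dotp /= mul0r addr0 dotvC !dotvZl (dotvC zeta) dotvZl => reach_y.
rewrite yx normvZ (gtr0_norm t_gt0) ltNge ler_pdivrMr ?mulr_gt0 ?sqrtr_gt0 //.
apply/negP => D_le.
have D2 : D ^+ 2 <= M ^+ 2 * (t ^+ 2 * dotv zeta zeta).
  have := ler_pM (normr_ge0 D) (normr_ge0 D) D_le D_le.
  by rewrite -!expr2 real_normK ?num_real // !exprMn sqr_normv.
have := ler_wpM2l sigma_ge0 D2; have := mulr_gt0 t_gt0 z_gt0.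
by move: reach_y small; rewrite -!expr2; nra.
Qed.

Lemma horizontal_normal_non_lipschitz (R : realType) (N : nat) (Omega : set 'rV[R]_N)
    (T : 'rV[R]_N -> R) x zeta :
  open Omega -> Omega x -> zeta != 0 -> prox_normal (epi Omega T) (x, T x) (zeta, 0) ->
  non_lipschitz_at Omega T x.
Proof.
move=> Oop Ox zeta_neq0 [sigma [sigma_ge0 normal]].
have [r r_gt0 ball_r] := open_normv_ball Oop Ox.
have nz_gt0 : 0 < normv zeta by rewrite normv_gt0.
pose c := r / (2 * normv zeta); pose t n := c * harmonic n.
have c_gt0 : 0 < c by rewrite divr_gt0 ?mulr_gt0.
have t_gt0 n : 0 < t n by rewrite mulr_gt0 ?harmonic_gt0.
have yx n : normv (x + t n *: zeta - x) < r.
  rewrite (addrC x) addrK normvZ gtr0_norm // /t /c.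
  have -> : r / (2 * normv zeta) * harmonic n * normv zeta = r / 2 * harmonic n.
    by field; rewrite lt0r_neq0.
  by have := harmonic_le1 R n; have := @harmonic_gt0 R n; nra.
exists (fun=> x), (fun n => x + t n *: zeta); split=> //; split.
  by move=> n; apply: ball_r.
split; first exact: cvg_cst.
split.
  have t0 : t n @[n --> \oo] --> 0.
    have -> : 0 = c * 0 :> R by rewrite mulr0.
    by apply: cvgM; [exact: cvg_cst | exact: cvg_harmonic].
  have := cvgD (cvg_cst x) (cvgZ t0 (cvg_cst zeta)).
  by rewrite scale0r addr0; apply.
split.
  move=> n; apply: contra zeta_neq0 => /eqP/(congr1 (fun y => y - x)).
  by rewrite subrr (addrC x) addrK => /esym/eqP; rewrite scaler_eq0 gt_eqF.
move=> M n.
have [m _ small] := near_harmonic_lt (sigma * c * (1 + M ^+ 2)) ltr01.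
exists (maxn n m); split; first exact: leq_maxl.
apply: horizontal_normal_steep normal _ _ _ _ _ => //.
  have -> : sigma * t (maxn n m) * (1 + M ^+ 2) =
    sigma * c * (1 + M ^+ 2) * harmonic (maxn n m) by rewrite /t; ring.
  exact: small (leq_maxr n m).
exact: ball_r.
Qed.

Theorem proposition3p3 (R : realType) (N : nat) (Omega : set 'rV[R]_N)
    (T : 'rV[R]_N -> R) (xbar : 'rV[R]_N) :
  open Omega -> {within Omega, continuous T} ->
  loc_pos_reach (epi Omega T) -> Omega xbar ->
  (non_lipschitz_at Omega T xbar <->
   exists zeta : 'rV[R]_N, zeta != 0 /\
     prox_normal (epi Omega T) (xbar, T xbar) (zeta, 0)).
Proof.
move=> Oop Tc reachK Ox; split; last first.
  move=> [zeta [zeta_neq0 normal]].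
  exact: (horizontal_normal_non_lipschitz Oop Ox zeta_neq0 normal).
move=> [xs [ys [Oxs [Oys [xs_x [ys_x [xy steep]]]]]]].
apply: contrapT => no_horizontal.
have [rho rho_gt0 [B lip]] := lipschitz_near Ox reachK Tc no_horizontal.
have [m1 _ xs_near] := near_normv_lt xs_x rho_gt0.
have [m2 _ ys_near] := near_normv_lt ys_x rho_gt0.
have [i [mi Bi]] := steep B (maxn m1 m2).
have xi := xs_near i (leq_trans (leq_maxl _ _) mi).
have yi := ys_near i (leq_trans (leq_maxr _ _) mi).
have d_gt0 : 0 < normv (ys i - xs i) by rewrite normv_gt0 subr_eq0 eq_sym; exact: xy.
by move: Bi; rewrite ltNge ler_pdivrMr // (lip _ _ (Oxs i) (Oys i) xi yi).
Qed.
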